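(* Let $f\in\mathcal{H}^2_{\omega}$ with $\|f\|=1$. Then the following are equivalent: (a) $f$ is $\mathcal{H}^2_{\omega}$-inner; (b) there exist a closed $z$-invariant subspace $\mathcal{M}\neq\{0\}$ of $\mathcal{H}^2_{\omega}$ and an integer $d\geq 0$ such that $z^k\in\mathcal{M}^{\perp}$ for all $0\leq k\leq d-1$, $z^d\notin\mathcal{M}^{\perp}$, and $f$ is a constant multiple of $P_{\mathcal{M}}(z^d)$, the orthogonal projection of $z^d$ onto $\mathcal{M}$.
   Context: Let $\omega=\{\omega_n\}_{n\geq 0}$ be a sequence of positive reals with $\omega_0=1$ and $\lim_{n\to\infty}\omega_{n+1}/\omega_n=1$. $\mathcal{H}^2_{\omega}$ is the Hilbert space of power series $f(z)=\sum_{n\ge0}a_nz^n$ with $\|f\|^2=\sum_{n\geq0}\omega_n|a_n|^2<\infty$ and inner product $\langle f,g\rangle=\sum_n\omega_na_n\overline{b_n}$ for $g=\sum b_nz^n$; its elements are holomorphic on the unit disk $\mathbb{D}$. A closed subspace $\mathcal{M}$ is $z$-invariant if $z\mathcal{M}\subset\mathcal{M}$. A function $f\in\mathcal{H}^2_{\omega}$ is $\mathcal{H}^2_{\omega}$-inner if $\|f\|=1$ and $\langle z^mf,f\rangle=0$ for all integers $m\geq1$. *)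

From Stdlib Require Import Reals Lra ClassicalEpsilon.
Open Scope R_scope.

(** Complex numbers as pairs (real part, imaginary part). *)
Definition Cx : Type := (R * R)%type.
Definition C0 : Cx := (0, 0).
Definition C1 : Cx := (1, 0).
Definition Cadd (a b : Cx) : Cx := (fst a + fst b, snd a + snd b).
Definition Csub (a b : Cx) : Cx := (fst a - fst b, snd a - snd b).
Definition Cmul (a b : Cx) : Cx :=
  (fst a * fst b - snd a * snd b, fst a * snd b + snd a * fst b).
Definition Cconj (a : Cx) : Cx := (fst a, - snd a).
Definition Cmod2 (a : Cx) : R := fst a * fst a + snd a * snd a.

(** Sum of a real series (the value is meaningful when the series converges). *)
Definition Rsum (u : nat -> R) : R :=
  epsilon (inhabits 0) (fun l => infinite_sum u l).

(** A formal power series is represented by its coefficient sequence. *)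
Definition series := nat -> Cx.

Definition weight (w : nat -> R) : Prop :=
  w 0%nat = 1 /\ (forall n, 0 < w n) /\ Un_cv (fun n => w (S n) / w n) 1.

Definition inH (w : nat -> R) (f : series) : Prop :=
  exists l, infinite_sum (fun n => w n * Cmod2 (f n)) l.

Definition norm2 (w : nat -> R) (f : series) : R :=
  Rsum (fun n => w n * Cmod2 (f n)).
Definition hnorm (w : nat -> R) (f : series) : R := sqrt (norm2 w f).
Definition inner (w : nat -> R) (f g : series) : Cx :=
  (Rsum (fun n => w n * fst (Cmul (f n) (Cconj (g n)))),
   Rsum (fun n => w n * snd (Cmul (f n) (Cconj (g n))))).

Definition szero : series := fun _ => C0.
Definition sadd (f g : series) : series := fun n => Cadd (f n) (g n).
Definition ssub (f g : series) : series := fun n => Csub (f n) (g n).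
Definition sscale (c : Cx) (f : series) : series := fun n => Cmul c (f n).

Definition zmul (f : series) : series :=
  fun n => match n with O => C0 | S k => f k end.
Definition zpow (m : nat) (f : series) : series := Nat.iter m zmul f.
Definition mono (k : nat) : series := fun n => if Nat.eqb n k then C1 else C0.

Definition is_inner (w : nat -> R) (f : series) : Prop :=
  inH w f /\ hnorm w f = 1 /\
  forall m : nat, (1 <= m)%nat -> inner w (zpow m f) f = C0.

Definition closed_subspace (w : nat -> R) (M : series -> Prop) : Prop :=
  (forall f, M f -> inH w f) /\
  M szero /\
  (forall f g, M f -> M g -> M (sadd f g)) /\
  (forall c f, M f -> M (sscale c f)) /\
  (forall f, inH w f ->
     (forall eps, 0 < eps -> exists g, M g /\ hnorm w (ssub f g) < eps) -> M f).

Definition z_invariant (M : series -> Prop) : Prop :=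
  forall f, M f -> M (zmul f).

Definition in_perp (w : nat -> R) (M : series -> Prop) (f : series) : Prop :=
  inH w f /\ forall g, M g -> inner w f g = C0.

Definition is_orth_proj (w : nat -> R) (M : series -> Prop) (x p : series) : Prop :=
  M p /\ forall g, M g -> inner w (ssub x p) g = C0.

(* If f is inner, let d be the order of its lowest nonzero coefficient, c = <z^d, f> and
   p = c f.  The series vanishing below order d all of whose shifts are orthogonal to
   z^d - p form a closed z-invariant subspace M (closed because z is bounded on H^2_w,
   which is what w_(n+1)/w_n -> 1 gives); p lies in M since <z^d, p> = |c|^2 = <p, p>
   and, for m >= 1, <z^d, z^m p> = 0 and <p, z^m p> = |c|^2 conj <z^m f, f> = 0.
   Hence p = P_M(z^d) and f = p / c.  Conversely, if z^k is orthogonal to M for k < d,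
   then p = P_M(z^d) vanishes below order d, so for m >= 1
   <p, z^m p> = <z^d, z^m p> - <z^d - p, z^m p> = 0 - 0, and the same holds for c p. *)

From Stdlib Require Import Reals Lra Lia Wf_nat Classical ClassicalEpsilon FunctionalExtensionality.
From Coquelicot Require Import Coquelicot.
Open Scope R_scope.

Ltac Cx_ring :=
  apply injective_projections;
  unfold sadd, ssub, sscale, szero, Cadd, Csub, Cmul, Cconj, C0, C1; simpl; ring.

Lemma Rsum_eq u l : infinite_sum u l -> Rsum u = l.
Proof.
  intros H. unfold Rsum.
  eapply uniqueness_sum; [apply epsilon_spec; exists l|]; exact H.
Qed.

Lemma Rsum_Series u : ex_series u -> Rsum u = Series u.
Proof.
  intros [l H]. rewrite (is_series_unique _ _ H).
  apply Rsum_eq, is_series_Reals, H.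
Qed.

Lemma infinite_sum_single u k :
  (forall n, n <> k -> u n = 0) -> infinite_sum u (u k).
Proof.
  intros Hu.
  assert (Hpart : forall n, (k <= n)%nat -> sum_f_R0 u n = u k).
  { induction n as [|n IH]; intros Hkn; simpl.
    - now replace k with 0%nat by lia.
    - destruct (Nat.eq_dec k (S n)) as [->|Hk].
      + rewrite (sum_eq_R0 u n) by (intros i Hi; apply Hu; lia). ring.
      + rewrite IH, (Hu (S n)) by lia. ring. }
  intros eps Heps. exists k. intros n Hn.
  rewrite Hpart by lia. unfold R_dist. now rewrite Rminus_diag, Rabs_R0.
Qed.

Lemma Rsum_single u k : (forall n, n <> k -> u n = 0) -> Rsum u = u k.
Proof. intros Hu. apply Rsum_eq, infinite_sum_single, Hu. Qed.

Lemma Rsum_zero u : (forall n, u n = 0) -> Rsum u = 0.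
Proof. intros Hu. rewrite (Rsum_single u 0); auto. Qed.

Lemma ex_series_lincomb u v a b :
  ex_series u -> ex_series v -> ex_series (fun n => a * u n + b * v n).
Proof.
  intros Hu Hv.
  apply (ex_series_plus (fun n => a * u n) (fun n => b * v n)).
  - exact (ex_series_scal_l a u Hu).
  - exact (ex_series_scal_l b v Hv).
Qed.

Lemma Series_lincomb u v a b : ex_series u -> ex_series v ->
  Series (fun n => a * u n + b * v n) = a * Series u + b * Series v.
Proof.
  intros Hu Hv.
  rewrite (Series_plus (fun n => a * u n) (fun n => b * v n)).
  - now rewrite !Series_scal_l.
  - exact (ex_series_scal_l a u Hu).
  - exact (ex_series_scal_l b v Hv).
Qed.

Lemma Series_lincomb4 x y x' y' a b a' b' :
  ex_series x -> ex_series y -> ex_series x' -> ex_series y' ->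
  Series (fun n => (a * x n + b * y n) + (a' * x' n + b' * y' n)) =
  (a * Series x + b * Series y) + (a' * Series x' + b' * Series y').
Proof.
  intros Hx Hy Hx' Hy'.
  rewrite (Series_plus (fun n => a * x n + b * y n) (fun n => a' * x' n + b' * y' n))
    by first [exact (ex_series_lincomb x y a b Hx Hy)
             | exact (ex_series_lincomb x' y' a' b' Hx' Hy')].
  now rewrite !Series_lincomb.
Qed.

Lemma Cmod2_ge0 a : 0 <= Cmod2 a.
Proof. unfold Cmod2; nra. Qed.

Lemma Cmod2_add_le a b : Cmod2 (Cadd a b) <= 2 * Cmod2 a + 2 * Cmod2 b.
Proof.
  destruct a as [a1 a2], b as [b1 b2]; unfold Cmod2, Cadd; simpl.
  pose proof (Rle_0_sqr (a1 - b1)); pose proof (Rle_0_sqr (a2 - b2)).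
  unfold Rsqr in *; nra.
Qed.

Lemma Cmod2_sub_le a b : Cmod2 (Csub a b) <= 2 * Cmod2 a + 2 * Cmod2 b.
Proof.
  destruct a as [a1 a2], b as [b1 b2]; unfold Cmod2, Csub; simpl.
  pose proof (Rle_0_sqr (a1 + b1)); pose proof (Rle_0_sqr (a2 + b2)).
  unfold Rsqr in *; nra.
Qed.

Lemma Cmod2_mul a b : Cmod2 (Cmul a b) = Cmod2 a * Cmod2 b.
Proof. destruct a, b; unfold Cmod2, Cmul; simpl; ring. Qed.

(* AM-GM: 2 t |a conj b| <= t^2 |a|^2 + |b|^2. *)
Lemma Cmul_conj_fst_bound a b t : 0 < t ->
  Rabs (fst (Cmul a (Cconj b))) <= (t * Cmod2 a + Cmod2 b / t) / 2.
Proof.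
  intros Ht. destruct a as [a1 a2], b as [b1 b2]; unfold Cmul, Cconj, Cmod2; simpl.
  assert (Hsq : 2 * t * Rabs (a1 * b1 - a2 * - b2) <=
                t * t * (a1 * a1 + a2 * a2) + (b1 * b1 + b2 * b2)).
  { pose proof (Rle_0_sqr (t * a1 - b1)); pose proof (Rle_0_sqr (t * a2 + b2)).
    pose proof (Rle_0_sqr (t * a1 + b1)); pose proof (Rle_0_sqr (t * a2 - b2)).
    unfold Rsqr in *; unfold Rabs; destruct Rcase_abs; nra. }
  apply (Rmult_le_reg_l (2 * t)); [lra|].
  replace (2 * t * ((t * (a1 * a1 + a2 * a2) + (b1 * b1 + b2 * b2) / t) / 2))
    with (t * t * (a1 * a1 + a2 * a2) + (b1 * b1 + b2 * b2)) by (field; lra).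
  exact Hsq.
Qed.

Lemma Cmul_conj_snd_bound a b t : 0 < t ->
  Rabs (snd (Cmul a (Cconj b))) <= (t * Cmod2 a + Cmod2 b / t) / 2.
Proof.
  intros Ht. destruct a as [a1 a2], b as [b1 b2].
  pose proof (Cmul_conj_fst_bound (a1, a2) (- b2, b1) t Ht) as H.
  unfold Cmul, Cconj, Cmod2 in *; simpl in *.
  replace (a1 * - b2 + a2 * b1) with (a1 * - b2 - a2 * - b1) by ring.
  replace (b1 * b1 + b2 * b2) with (- b2 * - b2 + b1 * b1) by ring. exact H.
Qed.

Lemma Cmod2_pos a : a <> C0 -> 0 < Cmod2 a.
Proof.
  intros Ha. destruct a as [a1 a2]; unfold Cmod2; simpl.
  destruct (Req_dec a1 0), (Req_dec a2 0); [subst; now exfalso | nra..].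
Qed.

Definition Cinv (a : Cx) : Cx := (fst a / Cmod2 a, - snd a / Cmod2 a).

Lemma sscale_Cinv_l a f : a <> C0 -> sscale (Cinv a) (sscale a f) = f.
Proof.
  intros Ha. pose proof (Cmod2_pos a Ha) as Hpos.
  apply functional_extensionality; intros n.
  destruct a as [a1 a2]; unfold Cinv, Cmod2 in *; simpl in *.
  apply injective_projections; unfold sscale, Cmul; simpl; field; lra.
Qed.

Section WeightedSpace.
Variable w : nat -> R.
Hypothesis wpos : forall n, 0 < w n.

Definition wsq (f : series) n := w n * Cmod2 (f n).
Definition wprod (p : Cx -> R) (f g : series) n := w n * p (Cmul (f n) (Cconj (g n))).

Lemma wsq_ge0 f n : 0 <= wsq f n.
Proof. unfold wsq. pose proof (wpos n); pose proof (Cmod2_ge0 (f n)); nra. Qed.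

Lemma inH_ex_series f : inH w f <-> ex_series (wsq f).
Proof. split; intros [l H]; exists l; now apply is_series_Reals. Qed.

Lemma norm2_Series f : inH w f -> norm2 w f = Series (wsq f).
Proof. intros Hf. apply Rsum_Series, inH_ex_series, Hf. Qed.

Lemma norm2_ge0 f : inH w f -> 0 <= norm2 w f.
Proof.
  intros Hf. rewrite norm2_Series by exact Hf.
  pose proof (Series_le (fun n => 0 * wsq f n) (wsq f)) as Hle.
  rewrite Series_scal_l, Rmult_0_l in Hle. apply Hle; [|now apply inH_ex_series].
  intros n; pose proof (wsq_ge0 f n); lra.
Qed.

Lemma inH_le f g h a b : inH w f -> inH w g ->
  (forall n, Cmod2 (h n) <= a * Cmod2 (f n) + b * Cmod2 (g n)) -> inH w h.
Proof.
  rewrite !inH_ex_series. intros Hf Hg Hh.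
  apply (@ex_series_le _ R_CompleteNormedModule _ (fun n => a * wsq f n + b * wsq g n)).
  - intros n. change (norm (wsq h n)) with (Rabs (wsq h n)).
    rewrite Rabs_pos_eq by apply wsq_ge0. unfold wsq.
    pose proof (wpos n). pose proof (Hh n). nra.
  - now apply ex_series_lincomb.
Qed.

Lemma inH_add f g : inH w f -> inH w g -> inH w (sadd f g).
Proof. intros Hf Hg. apply (inH_le f g _ 2 2 Hf Hg). intros n; apply Cmod2_add_le. Qed.

Lemma inH_sub f g : inH w f -> inH w g -> inH w (ssub f g).
Proof. intros Hf Hg. apply (inH_le f g _ 2 2 Hf Hg). intros n; apply Cmod2_sub_le. Qed.

Lemma inH_scale c f : inH w f -> inH w (sscale c f).
Proof.
  intros Hf. apply (inH_le f f _ (Cmod2 c) 0 Hf Hf).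
  intros n. unfold sscale. rewrite Cmod2_mul. lra.
Qed.

Lemma inH_single f k : (forall n, n <> k -> f n = C0) -> inH w f.
Proof.
  intros Hf. exists (wsq f k). apply infinite_sum_single.
  intros n Hn. unfold wsq, Cmod2. rewrite Hf by exact Hn. simpl; ring.
Qed.

Lemma inH_szero : inH w szero.
Proof. now apply (inH_single _ 0). Qed.

Lemma inH_mono k : inH w (mono k).
Proof.
  apply (inH_single _ k). intros n Hn. unfold mono.
  now destruct (Nat.eqb_spec n k).
Qed.

Lemma wprod_summable p f g t : 0 < t -> inH w f -> inH w g ->
  (forall a b, Rabs (p (Cmul a (Cconj b))) <= (t * Cmod2 a + Cmod2 b / t) / 2) ->
  ex_series (wprod p f g) /\
  Rabs (Series (wprod p f g)) <= (t * norm2 w f + norm2 w g / t) / 2.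
Proof.
  intros Ht Hf Hg Hp. rewrite !norm2_Series by assumption.
  apply inH_ex_series in Hf; apply inH_ex_series in Hg.
  set (bound n := (t / 2) * wsq f n + / (2 * t) * wsq g n).
  assert (Hb : forall n, Rabs (wprod p f g n) <= bound n).
  { intros n. unfold wprod, bound, wsq. pose proof (wpos n).
    rewrite Rabs_mult, (Rabs_pos_eq (w n)) by lra.
    eapply Rle_trans; [apply Rmult_le_compat_l; [lra | apply Hp]|].
    right; field; lra. }
  assert (EB : ex_series bound) by now apply ex_series_lincomb.
  assert (EA : ex_series (fun n => Rabs (wprod p f g n))).
  { apply (@ex_series_le _ R_CompleteNormedModule _ bound); [|exact EB].
    intros n. change (norm (Rabs (wprod p f g n))) with (Rabs (Rabs (wprod p f g n))).
    rewrite Rabs_Rabsolu. apply Hb. }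
  split; [now apply ex_series_Rabs|].
  eapply Rle_trans; [now apply Series_Rabs|].
  eapply Rle_trans; [apply Series_le; [|exact EB]|].
  - intros n; split; [apply Rabs_pos | apply Hb].
  - unfold bound. rewrite Series_lincomb by assumption. right; field; lra.
Qed.

Lemma ex_series_wprod_fst f g : inH w f -> inH w g -> ex_series (wprod fst f g).
Proof.
  intros Hf Hg. apply (wprod_summable fst f g 1); auto; [lra|].
  intros a b; apply Cmul_conj_fst_bound; lra.
Qed.

Lemma ex_series_wprod_snd f g : inH w f -> inH w g -> ex_series (wprod snd f g).
Proof.
  intros Hf Hg. apply (wprod_summable snd f g 1); auto; [lra|].
  intros a b; apply Cmul_conj_snd_bound; lra.
Qed.

Lemma inner_Series f g : inH w f -> inH w g ->
  inner w f g = (Series (wprod fst f g), Series (wprod snd f g)).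
Proof.
  intros Hf Hg. unfold inner. f_equal; apply Rsum_Series.
  - now apply ex_series_wprod_fst.
  - now apply ex_series_wprod_snd.
Qed.

Lemma inner_bound f g t : 0 < t -> inH w f -> inH w g ->
  Rabs (fst (inner w f g)) <= (t * norm2 w f + norm2 w g / t) / 2 /\
  Rabs (snd (inner w f g)) <= (t * norm2 w f + norm2 w g / t) / 2.
Proof.
  intros Ht Hf Hg. rewrite inner_Series by assumption; simpl. split.
  - apply (wprod_summable fst f g t); auto. intros; now apply Cmul_conj_fst_bound.
  - apply (wprod_summable snd f g t); auto. intros; now apply Cmul_conj_snd_bound.
Qed.

Lemma inner_lincomb a b f g f' g' h k :
  inH w f -> inH w g -> inH w f' -> inH w g' -> inH w h -> inH w k ->
  (forall n, Cmul (h n) (Cconj (k n)) =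
             Cadd (Cmul a (Cmul (f n) (Cconj (g n))))
                  (Cmul b (Cmul (f' n) (Cconj (g' n))))) ->
  inner w h k = Cadd (Cmul a (inner w f g)) (Cmul b (inner w f' g')).
Proof.
  intros Hf Hg Hf' Hg' Hh Hk Hpt. rewrite !inner_Series by assumption.
  pose proof (ex_series_wprod_fst f g Hf Hg); pose proof (ex_series_wprod_snd f g Hf Hg).
  pose proof (ex_series_wprod_fst f' g' Hf' Hg');
    pose proof (ex_series_wprod_snd f' g' Hf' Hg').
  destruct a as [a1 a2], b as [b1 b2]. unfold Cadd, Cmul; simpl.
  apply injective_projections; simpl.
  - rewrite (Series_ext _ (fun n =>
        (a1 * wprod fst f g n + - a2 * wprod snd f g n) +
        (b1 * wprod fst f' g' n + - b2 * wprod snd f' g' n))).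
    + rewrite Series_lincomb4 by assumption. ring.
    + intros n. unfold wprod. rewrite Hpt. unfold Cadd, Cmul; simpl; ring.
  - rewrite (Series_ext _ (fun n =>
        (a2 * wprod fst f g n + a1 * wprod snd f g n) +
        (b2 * wprod fst f' g' n + b1 * wprod snd f' g' n))).
    + rewrite Series_lincomb4 by assumption. ring.
    + intros n. unfold wprod. rewrite Hpt. unfold Cadd, Cmul; simpl; ring.
Qed.

Lemma inner_sub_l f g h : inH w f -> inH w g -> inH w h ->
  inner w (ssub f g) h = Csub (inner w f h) (inner w g h).
Proof.
  intros Hf Hg Hh.
  rewrite (inner_lincomb C1 (-1, 0) f h g h); auto using inH_sub; [Cx_ring|].
  intros n; Cx_ring.
Qed.

Lemma inner_sub_r f g h : inH w f -> inH w g -> inH w h ->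
  inner w f (ssub g h) = Csub (inner w f g) (inner w f h).
Proof.
  intros Hf Hg Hh.
  rewrite (inner_lincomb C1 (-1, 0) f g f h); auto using inH_sub; [Cx_ring|].
  intros n; Cx_ring.
Qed.

Lemma inner_add_r f g h : inH w f -> inH w g -> inH w h ->
  inner w f (sadd g h) = Cadd (inner w f g) (inner w f h).
Proof.
  intros Hf Hg Hh.
  rewrite (inner_lincomb C1 C1 f g f h); auto using inH_add; [Cx_ring|].
  intros n; Cx_ring.
Qed.

Lemma inner_scale_l c f g : inH w f -> inH w g ->
  inner w (sscale c f) g = Cmul c (inner w f g).
Proof.
  intros Hf Hg.
  rewrite (inner_lincomb c C0 f g f g); auto using inH_scale; [Cx_ring|].
  intros n; Cx_ring.
Qed.

Lemma inner_scale_r c f g : inH w f -> inH w g ->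
  inner w f (sscale c g) = Cmul (Cconj c) (inner w f g).
Proof.
  intros Hf Hg.
  rewrite (inner_lincomb (Cconj c) C0 f g f g); auto using inH_scale; [Cx_ring|].
  intros n; Cx_ring.
Qed.

Lemma inner_conj f g : inH w f -> inH w g -> inner w g f = Cconj (inner w f g).
Proof.
  intros Hf Hg. rewrite !inner_Series by assumption. unfold Cconj; simpl. f_equal.
  - apply Series_ext; intros n. unfold wprod, Cmul, Cconj; simpl; ring.
  - rewrite <- Series_opp. apply Series_ext; intros n.
    unfold wprod, Cmul, Cconj; simpl; ring.
Qed.

Lemma inner_self f : inner w f f = (norm2 w f, 0).
Proof.
  unfold inner, norm2. f_equal.
  - f_equal. apply functional_extensionality; intros n.
    unfold Cmul, Cconj, Cmod2; simpl; ring.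
  - apply Rsum_zero. intros n. unfold Cmul, Cconj; simpl; ring.
Qed.

Lemma inner_szero_r f : inner w f szero = C0.
Proof.
  unfold inner; apply injective_projections; simpl; apply Rsum_zero;
    intros n; unfold szero, Cmul, Cconj, C0; simpl; ring.
Qed.

Lemma inner_mono k g : inner w (mono k) g = (w k * fst (g k), - (w k * snd (g k))).
Proof.
  assert (Hoff : forall n, n <> k -> Cmul (mono k n) (Cconj (g n)) = C0).
  { intros n Hn. unfold mono. destruct (Nat.eqb_spec n k); [lia | Cx_ring]. }
  assert (Hon : Cmul (mono k k) (Cconj (g k)) = Cconj (g k)).
  { unfold mono. rewrite Nat.eqb_refl. Cx_ring. }
  unfold inner. rewrite !(Rsum_single _ k), Hon.
  - unfold Cconj; simpl. f_equal; ring.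
  - intros n Hn; rewrite Hoff by exact Hn; simpl; ring.
  - intros n Hn; rewrite Hoff by exact Hn; simpl; ring.
Qed.

Lemma inner_mono_eq0 k g : inner w (mono k) g = C0 <-> g k = C0.
Proof.
  rewrite inner_mono. pose proof (wpos k). destruct (g k) as [a b]; simpl.
  unfold C0; split; intros E; injection E; intros; f_equal; nra.
Qed.

Lemma inner_eq0_of_approx f g : inH w f -> inH w g ->
  (forall eps, 0 < eps ->
     exists h, inH w h /\ inner w f h = C0 /\ norm2 w (ssub g h) < eps) ->
  inner w f g = C0.
Proof.
  intros Hf Hg Happ. pose proof (norm2_ge0 f Hf) as Hf0.
  assert (Hsmall : forall e, 0 < e ->
            Rabs (fst (inner w f g)) < e /\ Rabs (snd (inner w f g)) < e).
  { intros e He. set (t := e / (norm2 w f + 1)).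
    assert (Ht : 0 < t) by (unfold t; apply Rdiv_lt_0_compat; lra).
    assert (Htf : t * norm2 w f < e).
    { assert (t * (norm2 w f + 1) = e) by (unfold t; field; lra). nra. }
    destruct (Happ (t * e)) as [h [Hh [Hfh Hgh]]]; [nra|].
    pose proof (inner_sub_r f g h Hf Hg Hh) as Hsub. rewrite Hfh in Hsub.
    destruct (inner_bound f (ssub g h) t Ht Hf (inH_sub g h Hg Hh)) as [B1 B2].
    assert (norm2 w (ssub g h) / t < e) by (apply Rlt_div_l; lra).
    rewrite Hsub in B1, B2. destruct (inner w f g) as [x1 x2].
    unfold Csub, C0 in B1, B2; simpl in *. rewrite Rminus_0_r in B1, B2. lra. }
  apply injective_projections; apply Req_lt_aux; intros [e He]; simpl;
    rewrite Rminus_0_r; apply Hsmall, He.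
Qed.

End WeightedSpace.

Lemma zpow_coef m f n : zpow m f n = if Nat.ltb n m then C0 else f (n - m)%nat.
Proof.
  revert n. induction m as [|m IH]; intros n.
  - simpl. now rewrite Nat.sub_0_r.
  - change (zpow (S m) f n) with (zmul (zpow m f) n).
    destruct n as [|n]; simpl; [reflexivity | apply IH].
Qed.

Lemma zpow_S m f : zpow (S m) f = zpow m (zmul f).
Proof. apply Nat.iter_succ_r. Qed.

Lemma zpow_map (F : Cx -> Cx -> Cx) f g m : F C0 C0 = C0 ->
  zpow m (fun n => F (f n) (g n)) = fun n => F (zpow m f n) (zpow m g n).
Proof.
  intros HF. apply functional_extensionality; intros n. rewrite !zpow_coef.
  now destruct (Nat.ltb n m).
Qed.

Lemma zpow_add f g m : zpow m (sadd f g) = sadd (zpow m f) (zpow m g).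
Proof. apply (zpow_map Cadd); Cx_ring. Qed.

Lemma zpow_sub f g m : zpow m (ssub f g) = ssub (zpow m f) (zpow m g).
Proof. apply (zpow_map Csub); Cx_ring. Qed.

Lemma zpow_scale c f m : zpow m (sscale c f) = sscale c (zpow m f).
Proof. apply (zpow_map (fun _ b => Cmul c b) f f); Cx_ring. Qed.

Lemma zpow_szero m : zpow m szero = szero.
Proof. apply (zpow_map (fun _ _ => C0) szero szero); reflexivity. Qed.

Lemma weight_ratio_bounded w : (forall n, 0 < w n) ->
  Un_cv (fun n => w (S n) / w n) 1 -> exists K, 0 < K /\ forall n, w (S n) <= K * w n.
Proof.
  intros wpos Hcv. set (r n := w (S n) / w n).
  destruct (Hcv 1) as [N HN]; [lra|].
  assert (Hhead : exists B, forall n, (n <= N)%nat -> r n <= B).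
  { clear HN. induction N as [|N [B HB]].
    - exists (r 0%nat). intros n Hn. replace n with 0%nat by lia. lra.
    - exists (Rmax B (r (S N))). intros n Hn.
      destruct (Nat.eq_dec n (S N)) as [->|Hne]; [apply Rmax_r|].
      eapply Rle_trans; [apply HB; lia | apply Rmax_l]. }
  destruct Hhead as [B HB].
  exists (Rmax 2 B). split; [pose proof (Rmax_l 2 B); lra|]. intros n.
  replace (w (S n)) with (r n * w n) by (unfold r; field; pose proof (wpos n); lra).
  apply Rmult_le_compat_r; [pose proof (wpos n); lra|].
  destruct (Compare_dec.le_lt_dec n N) as [Hn | Hn].
  - eapply Rle_trans; [apply HB, Hn | apply Rmax_r].
  - specialize (HN n ltac:(lia)). unfold R_dist in HN. apply Rabs_def2 in HN.
    fold (r n) in HN. pose proof (Rmax_l 2 B). lra.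
Qed.

Section ShiftBound.
Variable w : nat -> R.
Hypothesis wpos : forall n, 0 < w n.
Variable K : R.
Hypothesis Kpos : 0 < K.
Hypothesis HK : forall n, w (S n) <= K * w n.

Lemma zmul_bounded f : inH w f -> inH w (zmul f) /\ norm2 w (zmul f) <= K * norm2 w f.
Proof.
  intros Hf. pose proof Hf as Hf'. apply (inH_ex_series w) in Hf.
  assert (Hterm : forall k, 0 <= wsq w (zmul f) (S k) <= K * wsq w f k).
  { intros k. split; [now apply wsq_ge0|]. unfold wsq; simpl.
    pose proof (Cmod2_ge0 (f k)). pose proof (HK k). nra. }
  assert (Htail : ex_series (fun k => wsq w (zmul f) (S k))).
  { apply (@ex_series_le _ R_CompleteNormedModule _ (fun k => K * wsq w f k)).
    - intros k. change (norm (wsq w (zmul f) (S k))) with (Rabs (wsq w (zmul f) (S k))).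
      rewrite Rabs_pos_eq; apply Hterm.
    - exact (ex_series_scal_l K _ Hf). }
  assert (Hz : inH w (zmul f)) by (apply inH_ex_series, ex_series_incr_1, Htail).
  split; [exact Hz|]. rewrite !norm2_Series by assumption.
  rewrite Series_incr_1 by now apply inH_ex_series.
  replace (wsq w (zmul f) 0) with 0 by (unfold wsq, Cmod2; simpl; ring).
  rewrite Rplus_0_l, <- Series_scal_l.
  apply Series_le; [exact Hterm | exact (ex_series_scal_l K _ Hf)].
Qed.

Lemma zpow_bounded m f : inH w f ->
  inH w (zpow m f) /\ norm2 w (zpow m f) <= K ^ m * norm2 w f.
Proof.
  intros Hf. induction m as [|m [Hm Bm]]; simpl; [split; [exact Hf | lra]|].
  destruct (zmul_bounded _ Hm) as [Hz Bz]. split; [exact Hz|].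
  pose proof (pow_lt K m Kpos). nra.
Qed.

Lemma inH_zpow m f : inH w f -> inH w (zpow m f).
Proof. intros Hf. exact (proj1 (zpow_bounded m f Hf)). Qed.

End ShiftBound.

Definition shift_orth (w : nat -> R) (f : series) : Prop :=
  forall m : nat, (1 <= m)%nat -> inner w (zpow m f) f = C0.

Definition vanishes_below (d : nat) (f : series) : Prop :=
  forall k : nat, (k < d)%nat -> f k = C0.

Lemma exists_lowest_nonzero (f : series) :
  (exists n, f n <> C0) -> exists d, f d <> C0 /\ vanishes_below d f.
Proof.
  intros Hnz.
  destruct (dec_inh_nat_subset_has_unique_least_element (fun n => f n <> C0)
              (fun n => classic _) Hnz) as [d [[Hd Hmin] _]].
  exists d. split; [exact Hd|]. intros k Hk. apply NNPP. intros Hne.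
  specialize (Hmin k Hne). lia.
Qed.

(* The subspace M of the forward direction, used with [q = z^d - p]. *)
Definition zorth_space (w : nat -> R) (d : nat) (q : series) (g : series) : Prop :=
  inH w g /\ vanishes_below d g /\ forall m : nat, inner w q (zpow m g) = C0.

Section Subspaces.
Variable w : nat -> R.
Hypothesis wpos : forall n, 0 < w n.

Lemma inner_zpow_swap_eq0 m f : inH w f -> inH w (zpow m f) ->
  inner w f (zpow m f) = C0 <-> inner w (zpow m f) f = C0.
Proof.
  intros Hf Hz. rewrite (inner_conj w wpos (zpow m f) f Hz Hf).
  split; intros E; [|rewrite E]; destruct (inner w (zpow m f) f) as [a b];
    unfold Cconj, C0 in *; simpl in *; [injection E; intros|]; f_equal; lra.
Qed.

Lemma shift_orth_scale c f : inH w f -> (forall m, inH w (zpow m f)) ->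
  shift_orth w f -> shift_orth w (sscale c f).
Proof.
  intros Hf Hz Hsh m Hm. rewrite zpow_scale.
  rewrite inner_scale_l, inner_scale_r, Hsh by auto using inH_scale.
  Cx_ring.
Qed.

Lemma inner_mono_zpow_vanishing d m f : (1 <= m)%nat -> vanishes_below d f ->
  inner w (mono d) (zpow m f) = C0.
Proof.
  intros Hm Hf. apply (inner_mono_eq0 w wpos). rewrite zpow_coef.
  destruct (Nat.ltb_spec d m); [reflexivity | apply Hf; lia].
Qed.

Lemma in_perp_mono_vanishes M d p :
  (forall k, (k < d)%nat -> in_perp w M (mono k)) -> M p -> vanishes_below d p.
Proof. intros Hperp Hp k Hk. apply (inner_mono_eq0 w wpos), (proj2 (Hperp k Hk)), Hp. Qed.

(* <z^m p, p> = conj <p, z^m p> = conj (<z^d, z^m p> - <z^d - p, z^m p>), and both terms vanish. *)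
Lemma orth_proj_mono_shift_orth M d p : closed_subspace w M -> z_invariant M ->
  (forall k, (k < d)%nat -> in_perp w M (mono k)) ->
  is_orth_proj w M (mono d) p -> shift_orth w p.
Proof.
  intros [HMH _] Hzinv Hperp [Hp Horth] m Hm.
  assert (HzM : forall j, M (zpow j p)).
  { induction j as [|j IH]; [exact Hp | apply Hzinv, IH]. }
  assert (Hvan : vanishes_below d p) by exact (in_perp_mono_vanishes M d p Hperp Hp).
  apply inner_zpow_swap_eq0; auto.
  pose proof (Horth _ (HzM m)) as Hq.
  rewrite (inner_sub_l w wpos) in Hq by auto using inH_mono.
  rewrite (inner_mono_zpow_vanishing d m p Hm Hvan) in Hq.
  destruct (inner w p (zpow m p)) as [a b].
  unfold Csub, C0 in Hq; simpl in Hq; injection Hq; intros.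
  unfold C0; f_equal; lra.
Qed.

Variable K : R.
Hypothesis Kpos : 0 < K.
Hypothesis HK : forall n, w (S n) <= K * w n.

Section ZorthSpace.
Variable d : nat.
Variable q : series.
Hypothesis Hq : inH w q.

Lemma zorth_space_z_invariant : z_invariant (zorth_space w d q).
Proof.
  intros g [Hg [Hvan Horth]]. split; [exact (inH_zpow w wpos K Kpos HK 1 g Hg) | split].
  - intros [|k] Hk; [reflexivity | apply Hvan; simpl; lia].
  - intros m. rewrite <- zpow_S. apply Horth.
Qed.

Lemma zorth_space_approx g : inH w g ->
  (forall eps, 0 < eps -> exists h, zorth_space w d q h /\ hnorm w (ssub g h) < eps) ->
  zorth_space w d q g.
Proof.
  intros Hg Happ.
  assert (Happ2 : forall e, 0 < e ->
            exists h, zorth_space w d q h /\ norm2 w (ssub g h) < e).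
  { intros e He. destruct (Happ (sqrt e) (sqrt_lt_R0 e He)) as [h [Hh Hgh]].
    exists h; split; [exact Hh | now apply sqrt_lt_0_alt]. }
  split; [exact Hg | split].
  - intros k Hk. apply (inner_mono_eq0 w wpos).
    apply (inner_eq0_of_approx w wpos); auto using inH_mono.
    intros e He. destruct (Happ2 e He) as [h [[Hh [Hvan _]] Hgh]].
    exists h. repeat split; auto. now apply (inner_mono_eq0 w wpos), Hvan.
  - intros m. apply (inner_eq0_of_approx w wpos);
      [exact Hq | now apply (inH_zpow w wpos K Kpos HK) |].
    intros e He. pose proof (pow_lt K m Kpos) as HKm.
    destruct (Happ2 (e / K ^ m)) as [h [[Hh [_ Horth]] Hgh]];
      [now apply Rdiv_lt_0_compat|].
    exists (zpow m h).
    split; [now apply (inH_zpow w wpos K Kpos HK) | split; [exact (Horth m)|]].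
    rewrite <- zpow_sub.
    destruct (zpow_bounded w wpos K Kpos HK m (ssub g h)) as [_ Hb];
      [now apply (inH_sub w wpos)|].
    apply Rlt_div_r in Hgh; [lra | exact HKm].
Qed.

Lemma zorth_space_closed : closed_subspace w (zorth_space w d q).
Proof.
  split; [intros g Hg; apply Hg|]. split; [|split; [|split]].
  - split; [apply inH_szero | split; [intros k _; reflexivity|]].
    intros m. rewrite zpow_szero. apply inner_szero_r.
  - intros g h [Hg [Hgv Hgo]] [Hh [Hhv Hho]].
    split; [now apply (inH_add w wpos) | split].
    + intros k Hk. unfold sadd. rewrite Hgv, Hhv by exact Hk. Cx_ring.
    + intros m. rewrite zpow_add, (inner_add_r w wpos), Hgo, Hho
        by (exact Hq || now apply (inH_zpow w wpos K Kpos HK)).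
      Cx_ring.
  - intros c g [Hg [Hgv Hgo]]. split; [now apply (inH_scale w wpos) | split].
    + intros k Hk. unfold sscale. rewrite Hgv by exact Hk. Cx_ring.
    + intros m. rewrite zpow_scale, (inner_scale_r w wpos), Hgo
        by (exact Hq || now apply (inH_zpow w wpos K Kpos HK)).
      Cx_ring.
  - exact zorth_space_approx.
Qed.

End ZorthSpace.

(* With [c = <z^d, f>], the series [p = c f] satisfies <z^d, p> = |c|^2 = <p, p>,
   which is the [m = 0] orthogonality; for [m >= 1] it is inherited from [f]. *)
Lemma scaled_mem_zorth_space f d : inH w f -> norm2 w f = 1 ->
  shift_orth w f -> vanishes_below d f ->
  let p := sscale (inner w (mono d) f) f in zorth_space w d (ssub (mono d) p) p.
Proof.
  intros Hf N1 Hsh Hvan p.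
  assert (Hp : inH w p) by now apply (inH_scale w wpos).
  assert (Hzp : forall m, inH w (zpow m p)) by (intros m; now apply (inH_zpow w wpos K Kpos HK)).
  assert (Hpvan : vanishes_below d p).
  { intros k Hk. unfold p, sscale. rewrite Hvan by exact Hk. Cx_ring. }
  split; [exact Hp | split; [exact Hpvan|]].
  intros [|m]; rewrite (inner_sub_l w wpos) by auto using inH_mono.
  - simpl. unfold p.
    rewrite !(inner_scale_r w wpos), (inner_scale_l w wpos), inner_self, N1
      by auto using inH_mono, inH_scale.
    Cx_ring.
  - assert (Hm : (1 <= S m)%nat) by lia.
    assert (Hpsh : shift_orth w p).
    { apply shift_orth_scale; auto. intros j; now apply (inH_zpow w wpos K Kpos HK). }
    rewrite (inner_mono_zpow_vanishing d (S m) p Hm Hpvan).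
    rewrite (proj2 (inner_zpow_swap_eq0 (S m) p Hp (Hzp (S m))) (Hpsh (S m) Hm)).
    Cx_ring.
Qed.

Lemma is_inner_orth_proj_mono f : is_inner w f ->
  exists M : series -> Prop,
    closed_subspace w M /\ z_invariant M /\ (exists g, M g /\ g <> szero) /\
    exists d : nat,
      (forall k : nat, (k < d)%nat -> in_perp w M (mono k)) /\
      ~ in_perp w M (mono d) /\
      exists (c : Cx) (p : series), is_orth_proj w M (mono d) p /\ f = sscale c p.
Proof.
  intros [Hf [Hn Hsh]].
  assert (N1 : norm2 w f = 1).
  { unfold hnorm in Hn. rewrite <- sqrt_1 in Hn.
    apply sqrt_inj; [now apply (norm2_ge0 w wpos) | lra | exact Hn]. }
  assert (Hnz : exists n, f n <> C0).
  { apply not_all_not_ex. intros Hall.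
    assert (norm2 w f = 0); [|lra].
    apply Rsum_zero. intros n. rewrite (NNPP _ (Hall n)). unfold Cmod2; simpl; ring. }
  destruct (exists_lowest_nonzero f Hnz) as [d [Hfd Hvan]].
  set (c := inner w (mono d) f).
  assert (Hc : c <> C0) by (intros E; apply Hfd, (inner_mono_eq0 w wpos), E).
  pose proof (scaled_mem_zorth_space f d Hf N1 Hsh Hvan) as HpM. simpl in HpM.
  fold c in HpM. set (p := sscale c f) in HpM.
  set (M := zorth_space w d (ssub (mono d) p)).
  assert (Hdp : inner w (mono d) p = (Cmod2 c, 0)).
  { unfold p. rewrite (inner_scale_r w wpos) by auto using inH_mono.
    fold c. unfold Cmod2; Cx_ring. }
  assert (Hdp0 : inner w (mono d) p <> C0).
  { rewrite Hdp. intros E. injection E as E. pose proof (Cmod2_pos c Hc). lra. }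
  exists M. split; [|split; [|split]].
  - apply zorth_space_closed, (inH_sub w wpos); [apply inH_mono | apply HpM].
  - apply zorth_space_z_invariant.
  - exists p. split; [exact HpM|]. intros E. apply Hdp0. rewrite E. apply inner_szero_r.
  - exists d. split; [|split].
    + intros k Hk. split; [apply inH_mono|]. intros g [_ [Hgv _]].
      now apply (inner_mono_eq0 w wpos), Hgv.
    + intros [_ Hperp]. exact (Hdp0 (Hperp p HpM)).
    + exists (Cinv c), p. split.
      * split; [exact HpM|]. intros g [_ [_ Hgo]]. exact (Hgo 0%nat).
      * unfold p. now rewrite sscale_Cinv_l.
Qed.

End Subspaces.

Theorem mainTheorem1 (w : nat -> R) (hw : weight w) (f : series)
  (hf : inH w f) (hnf : hnorm w f = 1) :
  is_inner w f <->
  exists M : series -> Prop,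
    closed_subspace w M /\ z_invariant M /\ (exists g, M g /\ g <> szero) /\
    exists d : nat,
      (forall k : nat, (k < d)%nat -> in_perp w M (mono k)) /\
      ~ in_perp w M (mono d) /\
      exists (c : Cx) (p : series),
        is_orth_proj w M (mono d) p /\ f = sscale c p.
Proof.
  destruct hw as [_ [wpos Hratio]].
  destruct (weight_ratio_bounded w wpos Hratio) as [K [Kpos HK]].
  split; [exact (is_inner_orth_proj_mono w wpos K Kpos HK f)|].
  intros [M [HM [Hzinv [_ [d [Hperp [_ [c [p [Hproj ->]]]]]]]]]].
  split; [exact hf | split; [exact hnf|]].
  assert (Hp : inH w p) by exact (proj1 HM p (proj1 Hproj)).
  apply (shift_orth_scale w wpos c p Hp).
  - intros m. exact (inH_zpow w wpos K Kpos HK m p Hp).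
  - exact (orth_proj_mono_shift_orth w wpos M d p HM Hzinv Hperp Hproj).
Qed.
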